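(* Let $\mathcal G=(\mathcal V,\mathcal E)$ be a $k$-uniform hypergraph with $|\mathcal V|=n$, $|\mathcal E|=m\ge1$, in which every vertex lies in exactly $\Delta$ hyperedges. Let $H=\sum_{\eta\in\mathcal E}H_\eta$ be a local Hamiltonian on $(\mathbb C^d)^{\otimes n}$ with each $H_\eta$ Hermitian, acting only on the qudits in $\eta$, and $\|H_\eta\|\le1$. Let $h=\frac1mH$ and let $\nu_h$ be its empirical spectral distribution. Then \[\operatorname{Var}(\nu_h)=\int t^2\,d\nu_h(t)-\Big(\int t\,d\nu_h(t)\Big)^2\le \frac{4k^2}{n}.\]
   Context: $H_\eta$ stands for $H_\eta\otimes I$. The empirical spectral distribution of a Hermitian operator $A$ on a $D$-dimensional space is $\nu_A=\frac1D\sum_{i=1}^D\delta_{\lambda_i(A)}$, with eigenvalues counted with multiplicity. *)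

From HB Require Import structures.
From mathcomp Require Import all_boot all_order all_algebra.
From mathcomp Require Import complex.
Set Implicit Arguments. Unset Strict Implicit. Unset Printing Implicit Defensive.
Import Order.TTheory GRing.Theory Num.Theory.
Local Open Scope ring_scope.

(* Computational basis of (C^d)^{(x) n}: configurations 'I_n -> 'I_d. *)
Definition config (n d : nat) := {ffun 'I_n -> 'I_d}.
Definition qdim (n d : nat) : nat := #|{: config n d}|.
Definition conf {n d : nat} (i : 'I_(qdim n d)) : config n d := enum_val i.

Definition adjoint {C : numClosedFieldType} {D : nat} (A : 'M[C]_D) : 'M[C]_D :=
  (map_mx Num.conj A)^T.
Definition is_hermitian_op {C : numClosedFieldType} {D : nat} (A : 'M[C]_D) : Prop :=
  adjoint A = A.

Definition opnorm_le {C : numClosedFieldType} {D : nat} (A : 'M[C]_D) (c : C) : Prop :=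
  forall v : 'cV[C]_D,
    \sum_i `|(A *m v) i 0| ^+ 2 <= c ^+ 2 * \sum_i `|v i 0| ^+ 2.

(* A acts only on the qudits in S: A = A_S (x) I, i.e. its matrix entries vanish
   unless the two configurations agree outside S, and they depend only on the
   restrictions of the two configurations to S. *)
Definition agree_on {n d : nat} (S : {set 'I_n}) (x y : config n d) : bool :=
  [forall q in S, x q == y q].
Definition acts_on {C : numClosedFieldType} {n d : nat} (S : {set 'I_n})
    (A : 'M[C]_(qdim n d)) : Prop :=
  (forall i j, ~~ agree_on (~: S) (conf i) (conf j) -> A i j = 0) /\
  (forall i j i' j',
     agree_on (~: S) (conf i) (conf j) -> agree_on (~: S) (conf i') (conf j') ->
     agree_on S (conf i) (conf i') -> agree_on S (conf j) (conf j') ->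
     A i j = A i' j').

Definition eigen_multiset {C : numClosedFieldType} {D : nat} (A : 'M[C]_D) (s : seq C) : Prop :=
  size s = D /\ char_poly A = \prod_(x <- s) ('X - x%:P).

(* Moments of the empirical spectral distribution nu_A = (1/D) sum_i delta_{lambda_i}. *)
Definition esd_moment {C : numClosedFieldType} (s : seq C) (p : nat) : C :=
  (size s)%:R^-1 * \sum_(x <- s) x ^+ p.
Definition esd_var {C : numClosedFieldType} (s : seq C) : C :=
  esd_moment s 2 - (esd_moment s 1) ^+ 2.

From HB Require Import structures.
From mathcomp Require Import all_boot all_order all_algebra.
From mathcomp Require Import complex.
From mathcomp Require Import sesquilinear spectral ring zify.
Set Implicit Arguments. Unset Strict Implicit. Unset Printing Implicit Defensive.
Import Order.TTheory GRing.Theory Num.Theory.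

(* Write h = (1/m) sum_e H_e and X0 = X - (tr X / D) I for the traceless part
   of an operator on the D-dimensional space (C^d)^(x)n.  For a Hermitian
   operator, the variance of its empirical spectral distribution equals
   tr(X0^2) / D (spectral theorem: the eigenvalue power sums are traces), so
     Var(nu_h) = (1 / (m^2 D)) sum_(e,f) tr(H_e0 H_f0).
   If e and f are disjoint, H_e and H_f act on different tensor factors, so
   tr(H_e H_f) / D = (tr H_e / D) (tr H_f / D) and tr(H_e0 H_f0) = 0; otherwise
   Cauchy-Schwarz and ||H_e|| <= 1 give tr(H_e0 H_f0) <= D.  Hence Var(nu_h) is
   at most N / m^2, where N counts the intersecting ordered pairs of
   hyperedges.  Double counting in the uniform regular hypergraph gives
   n Delta = m k and N <= m k Delta, so N / m^2 <= k^2 / n <= 4 k^2 / n. *)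

Section HypergraphCounting.
Variables (n k Delta : nat) (E : {set {set 'I_n}}).
Hypothesis uniformE : forall e, e \in E -> #|e| = k.
Hypothesis regularE : forall v, #|[set e in E | v \in e]| = Delta.

Lemma degree_sum v : \sum_(f in E) (v \in f) = #|[set e in E | v \in e]|.
Proof. by rewrite -big_mkcondr /= -sum1_card; apply: eq_bigl => f; rewrite !inE. Qed.

(* Handshake lemma: counting vertex-hyperedge incidences in two ways. *)
Lemma handshake : n * Delta = #|E| * k.
Proof.
have -> : n * Delta = \sum_(v : 'I_n) \sum_(f in E) (v \in f).
  by under eq_bigr do rewrite degree_sum regularE; rewrite sum_nat_const card_ord.
rewrite exchange_big /= -sum1_card big_distrl /=; apply: eq_bigr => e eE.
by rewrite mul1n -(uniformE eE) -sum1_card [RHS]big_mkcond.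
Qed.

(* Each hyperedge meets at most k * Delta hyperedges (itself included), since
   every hyperedge meeting e contains one of its k vertices. *)
Lemma intersecting_pairs_le :
  \sum_(e in E) \sum_(f in E) (e :&: f != set0) <= #|E| * k * Delta.
Proof.
rewrite -sum1_card !big_distrl /=; apply: leq_sum => e eE.
rewrite mul1n -(uniformE eE).
apply: (@leq_trans (\sum_(f in E) \sum_(v in e) (v \in f))).
  apply: leq_sum => f _; case: (set_0Vmem (e :&: f)) => [->|[v]].
    by rewrite eqxx.
  rewrite inE => /andP[ve vf]; rewrite (bigD1 v) //= vf.
  by case: (_ != _); rewrite // leq_addr.
rewrite exchange_big /=.
by under eq_bigr do rewrite degree_sum regularE; rewrite sum_nat_const.
Qed.

Local Open Scope ring_scope.

Lemma intersecting_pairs_density (F : numFieldType) :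
  (\sum_(e in E) \sum_(f in E) (e :&: f != set0))%:R / (#|E|%:R ^+ 2)
    <= (k%:R ^+ 2 / n%:R : F).
Proof.
set N := (\sum_(e in E) _)%N.
have [n0|n_gt0] := posnP n.
  have -> : N = 0%N.
    apply/eqP; rewrite sum_nat_eq0; apply/forall_inP => e _.
    rewrite sum_nat_eq0; apply/forall_inP => f _; rewrite eqb0 negbK.
    apply/eqP/setP => i; by move: (ltn_ord i); rewrite {2}n0.
  by rewrite mul0r divr_ge0 ?exprn_ge0 ?ler0n.
have [E0|E_gt0] := posnP #|E|.
  by rewrite E0 expr0n invr0 mulr0 divr_ge0 ?exprn_ge0 ?ler0n.
rewrite ler_pdivrMr ?exprn_gt0 ?ltr0n // mulrAC ler_pdivlMr ?ltr0n //.
rewrite -!natrX -!natrM ler_nat.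
have := intersecting_pairs_le; have := handshake; rewrite -/N; nia.
Qed.

End HypergraphCounting.

Local Open Scope ring_scope.

Lemma char_poly_conj (F : fieldType) (D : nat) (P A : 'M[F]_D) :
  P \in unitmx -> char_poly (invmx P *m A *m P) = char_poly A.
Proof.
move=> P_unit; pose f := @map_mx F {poly F} (@polyC F) D D.
have fPK : f (invmx P) *m f P = 1%:M by rewrite -map_mxM mulVmx // map_mx1.
have conjA : char_poly_mx (invmx P *m A *m P) = f (invmx P) *m char_poly_mx A *m f P.
  rewrite /char_poly_mx mulmxBr mulmxBl -!map_mxM; congr (_ - _).
  by rewrite -mulmxA mul_scalar_mx -scalemxAr fPK scalemx1.
by rewrite /char_poly conjA !det_mulmx mulrAC -det_mulmx fPK det1 mul1r.
Qed.

(* The first two power sums of the eigenvalues of a Hermitian matrix are the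
   traces of A and of A^2: diagonalize A by the spectral theorem. *)
Lemma eigen_power_sums (C : numClosedFieldType) (D : nat) (A : 'M[C]_D) s :
  is_hermitian_op A -> eigen_multiset A s ->
  \sum_(x <- s) x = \tr A /\ \sum_(x <- s) x ^+ 2 = \tr (A *m A).
Proof.
move=> hA [_ charA].
have /orthomx_spectralP : A \is normalmx.
  by rewrite qualifE (_ : (A ^t*)%sesqui = A) // -[RHS]hA /adjoint map_trmx.
set P := spectralmx A; set sp := spectral_diag A => defA.
have P_unit : P \in unitmx by apply: spectral_unit.
have /prod_XsubC_eq perm_s : \prod_(x <- s) ('X - x%:P) =
    \prod_(x <- [seq sp 0 i | i <- enum 'I_D]) ('X - x%:P).
  rewrite -charA defA char_poly_conj // char_poly_trig ?diag_mx_is_trig //.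
  by rewrite big_map big_enum /=; apply: eq_bigr => i _; rewrite mxE eqxx.
rewrite !(perm_big _ perm_s) /= !big_map defA; split.
  by rewrite mxtrace_mulC mulmxA mulmxV // mul1mx mxtrace_diag.
have -> : invmx P *m diag_mx sp *m P *m (invmx P *m diag_mx sp *m P) =
    invmx P *m (diag_mx sp *m diag_mx sp) *m P by rewrite !mulmxA mulmxK.
rewrite (mxtrace_mulC (invmx P *m _)) !mulmxA mulmxV // mul1mx /mxtrace.
by apply: eq_bigr => i _; rewrite mul_diag_mx !mxE eqxx mulr1n expr2.
Qed.

Section Locality.
Variables (C : numClosedFieldType) (n d : nat).
Local Notation config := (config n d).
Local Notation D := (qdim n d).

Definition entry (X : 'M[C]_D) (x y : config) : C := X (enum_rank x) (enum_rank y).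

Lemma sum_configs (G : 'I_D -> C) : \sum_(i < D) G i = \sum_(x : config) G (enum_rank x).
Proof.
rewrite (reindex (@enum_rank config)) //.
by exists enum_val => i _; [rewrite enum_rankK | rewrite enum_valK].
Qed.

Lemma conf_rank (x : config) : conf (enum_rank x) = x.
Proof. exact: enum_rankK. Qed.

Lemma acts_on_offdiag (S : {set 'I_n}) (X : 'M[C]_D) (x y : config) q :
  acts_on S X -> q \notin S -> x q != y q -> entry X x y = 0.
Proof.
move=> [X0 _] qS xyq; apply: X0; rewrite !conf_rank.
by apply/forall_inP => /(_ q); rewrite inE qS (negbTE xyq) => /(_ isT).
Qed.

Lemma acts_on_diag (S : {set 'I_n}) (X : 'M[C]_D) (x u : config) :
  acts_on S X -> agree_on S x u -> entry X x x = entry X u u.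
Proof.
have refl (U : {set 'I_n}) (z : config) : agree_on U z z by apply/forall_inP.
by move=> [_ X1] xu; apply: X1; rewrite !conf_rank ?refl.
Qed.

Section Disjoint.
Variables (S T : {set 'I_n}) (X Y : 'M[C]_D).
Hypotheses (disjST : S :&: T = set0) (actX : acts_on S X) (actY : acts_on T Y).

Lemma notin_disjoint q : q \in S -> q \notin T.
Proof. by move=> qS; apply/negP => qT; move/setP/(_ q): disjST; rewrite !inE qS qT. Qed.

(* For operators on disjoint supports, only diagonal entries contribute to
   the trace of the product: two distinct configurations differ at some
   qudit, which lies outside S or outside T. *)
Lemma trace_mul_disjoint_diag : \tr (X *m Y) = \sum_x entry X x x * entry Y x x.
Proof.
rewrite /mxtrace sum_configs; apply: eq_bigr => x _.
rewrite mxE sum_configs (bigD1 x) //= big1 ?addr0 // => y yx.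
have [q xyq] : exists q, x q != y q.
  apply/existsP; apply: contraR yx; rewrite negb_exists => /forallP xy.
  by apply/eqP/ffunP => q; apply/eqP; have := xy q; rewrite negbK eq_sym.
have [qS|qS] := boolP (q \in S).
  have yxq : y q != x q by rewrite eq_sym.
  by rewrite [X in _ * X](acts_on_offdiag actY (notin_disjoint qS) yxq) mulr0.
by rewrite [X in X * _](acts_on_offdiag actX qS xyq) mul0r.
Qed.

Definition glue (a b : config) : config := [ffun q => if q \in S then a q else b q].

(* Expanding tr X * tr Y over pairs (a, b) and substituting
   (a, b) := (glue a b, glue b a) makes each term the product of the diagonal
   entries of X and Y at glue a b. *)
Lemma trace_mul_disjoint : D%:R * \tr (X *m Y) = \tr X * \tr Y.
Proof.
rewrite trace_mul_disjoint_diag /mxtrace !sum_configs mulr_natl -sumrMnl.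
under eq_bigr do rewrite -[_ *+ D]sumr_const.
rewrite mulr_suml; under [RHS]eq_bigr do rewrite mulr_sumr.
rewrite !pair_big /=.
pose swap (p : config * config) := (glue p.1 p.2, glue p.2 p.1).
have swapK : involutive swap.
  by move=> [a b]; congr pair; apply/ffunP => q; rewrite !ffunE; case: (q \in S).
rewrite (reindex_inj (inv_inj swapK)); apply: eq_bigr => -[a b] _ /=.
congr (_ * _); [apply: acts_on_diag actX _ | apply: acts_on_diag actY _].
  by apply/forall_inP => q qS; rewrite ffunE qS.
by apply/forall_inP => q qT; rewrite ffunE; case: ifP => // /notin_disjoint; rewrite qT.
Qed.

End Disjoint.
End Locality.

Section Hermitian.
Variables (C : numClosedFieldType) (D : nat).
Implicit Types (X Y : 'M[C]_D) (a : C).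

Lemma hermitianP X : is_hermitian_op X <-> forall i j, X i j = (X j i)^*.
Proof.
split=> [hX i j | hX]; first by rewrite -[in LHS]hX /adjoint !mxE.
by apply/matrixP => i j; rewrite /adjoint !mxE hX conjCK.
Qed.

Lemma hermitianB X Y : is_hermitian_op X -> is_hermitian_op Y -> is_hermitian_op (X - Y).
Proof.
by move=> /hermitianP hX /hermitianP hY; apply/hermitianP => i j; rewrite !mxE hX hY rmorphB.
Qed.

Lemma hermitian_scale_sum (I : finType) (P : {pred I}) (F : I -> 'M[C]_D) a :
  (forall i, P i -> is_hermitian_op (F i)) -> a^* = a ->
  is_hermitian_op (a *: \sum_(i | P i) F i).
Proof.
move=> hF ha; apply/hermitianP => i j.
rewrite !mxE !summxE rmorphM /= ha rmorph_sum; congr (_ * _).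
by apply: eq_bigr => e Pe; have /hermitianP -> := hF e Pe.
Qed.

Lemma hermitian_trace_real X : is_hermitian_op X -> (\tr X)^* = \tr X.
Proof.
move=> /hermitianP hX; rewrite /mxtrace rmorph_sum.
by apply: eq_bigr => i _; rewrite [in RHS]hX.
Qed.

Lemma hermitian_shift X a : is_hermitian_op X -> a^* = a -> is_hermitian_op (X - a%:M).
Proof.
move=> hX ha; apply: hermitianB => //; apply/hermitianP => i j.
by rewrite !mxE; have [_|_] := eqVneq i j; rewrite ?mulr1n ?mulr0n ?ha ?rmorph0.
Qed.

(* tr(X^2) is the squared Hilbert-Schmidt norm of a Hermitian X. *)
Lemma trace_sq_ge0 X : is_hermitian_op X -> 0 <= \tr (X *m X).
Proof.
move=> /hermitianP hX; apply: sumr_ge0 => i _; rewrite mxE.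
by apply: sumr_ge0 => j _; rewrite (hX j i) -normCK exprn_ge0.
Qed.

(* Cauchy-Schwarz for the Hilbert-Schmidt inner product, in the form
   2 tr(XY) <= tr(X^2) + tr(Y^2), from tr((X - Y)^2) >= 0. *)
Lemma trace_mul_le X Y : is_hermitian_op X -> is_hermitian_op Y ->
  2%:R * \tr (X *m Y) <= \tr (X *m X) + \tr (Y *m Y).
Proof.
move=> hX hY; rewrite -subr_ge0; have := trace_sq_ge0 (hermitianB hX hY).
rewrite mulmxBl !mulmxBr !raddfB /= (mxtrace_mulC Y X).
by congr (0 <= _); ring.
Qed.

(* A Hermitian contraction satisfies tr(X^2) <= D: the j-th column of X has
   norm at most 1, and tr(X^2) is the sum of the squared column norms. *)
Lemma trace_sq_le_dim X : is_hermitian_op X -> opnorm_le X 1 -> \tr (X *m X) <= D%:R.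
Proof.
move=> /hermitianP hX normX.
have -> : (D%:R : C) = \sum_(j < D) 1 by rewrite sumr_const card_ord.
rewrite /mxtrace; under eq_bigr do rewrite mxE; rewrite exchange_big /=.
apply: ler_sum => j _; pose v : 'cV[C]_D := delta_mx j 0.
have v_entry i : v i 0 = (i == j)%:R by rewrite mxE andbT.
have Xv i : (X *m v) i 0 = X i j.
  rewrite mxE (bigD1 j) //= big1 ?addr0 => [|l lj]; first by rewrite v_entry eqxx mulr1.
  by rewrite v_entry (negbTE lj) mulr0.
have v_norm : \sum_i `|v i 0| ^+ 2 = 1.
  rewrite (bigD1 j) //= big1 ?addr0 => [|i ij]; first by rewrite v_entry eqxx normr1 expr1n.
  by rewrite v_entry (negbTE ij) normr0 expr0n.
suff <- : \sum_i `|(X *m v) i 0| ^+ 2 = \sum_i X i j * X j i.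
  by have := normX v; rewrite v_norm expr1n mul1r.
by apply: eq_bigr => i _; rewrite Xv normCK -hX.
Qed.

End Hermitian.

Section Centering.
Variables (C : numClosedFieldType) (D : nat).
Implicit Types (X Y : 'M[C]_D) (a : C).

Definition center X : 'M[C]_D := X - (\tr X / D%:R)%:M.

Lemma center_scale a X : center (a *: X) = a *: center X.
Proof. by rewrite /center linearZ /= scalerBr -mulrA -scale_scalar_mx. Qed.

Lemma center_sum (I : finType) (P : {pred I}) (F : I -> 'M[C]_D) :
  center (\sum_(i | P i) F i) = \sum_(i | P i) center (F i).
Proof.
rewrite /center sumrB raddf_sum /= mulr_suml; congr (_ - _).
by rewrite (raddf_sum (@scalar_mx C D)).
Qed.

Lemma center_hermitian X : is_hermitian_op X -> is_hermitian_op (center X).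
Proof.
move=> hX; apply: hermitian_shift => //.
by rewrite rmorphM fmorphV /= conjC_nat hermitian_trace_real.
Qed.

Lemma trace_center_mul X Y :
  \tr (center X *m center Y) = \tr (X *m Y) - \tr X * \tr Y / D%:R.
Proof.
have [D0|D_neq0] := eqVneq (D%:R : C) 0.
  by rewrite /center D0 invr0 !mulr0 raddf0 !subr0.
rewrite /center mulmxBl !mulmxBr mul_mx_scalar mul_scalar_mx -scalar_mxM.
rewrite !raddfB /= !linearZ /= mxtrace_scalar -mulr_natr.
by field.
Qed.

(* Operators on disjoint sets of qudits have orthogonal traceless parts. *)
Lemma center_mul_orthogonal X Y : D%:R != 0 :> C ->
  D%:R * \tr (X *m Y) = \tr X * \tr Y -> \tr (center X *m center Y) = 0.
Proof. by move=> D_neq0 factorXY; rewrite trace_center_mul -factorXY; field. Qed.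

(* Traceless parts of Hermitian contractions have Hilbert-Schmidt product at
   most D: tr(X0^2) <= tr(X^2) <= D, then Cauchy-Schwarz. *)
Lemma center_mul_le X Y : is_hermitian_op X -> is_hermitian_op Y ->
  opnorm_le X 1 -> opnorm_le Y 1 -> \tr (center X *m center Y) <= D%:R.
Proof.
have center_sq_le Z : is_hermitian_op Z -> opnorm_le Z 1 ->
    \tr (center Z *m center Z) <= D%:R.
  move=> hZ normZ; apply: le_trans (trace_sq_le_dim hZ normZ).
  rewrite trace_center_mul gerBl divr_ge0 ?ler0n //.
  by rewrite -{2}(hermitian_trace_real hZ) -normCK exprn_ge0.
move=> hX hY normX normY.
have := trace_mul_le (center_hermitian hX) (center_hermitian hY).
move=> /le_trans /(_ (lerD (center_sq_le X hX normX) (center_sq_le Y hY normY))).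
by rewrite -mulr2n -[D%:R *+ 2]mulr_natl ler_pM2l ?ltr0n.
Qed.

Lemma esd_var_center X s : is_hermitian_op X -> eigen_multiset X s ->
  esd_var s = \tr (center X *m center X) / D%:R.
Proof.
move=> hX eigX; have [sum1 sum2] := eigen_power_sums hX eigX.
rewrite /esd_var /esd_moment trace_center_mul (proj1 eigX) -sum2 -sum1.
under [in X in _ - X]eq_bigr do rewrite expr1.
have [D0|D_neq0] := eqVneq (D%:R : C) 0; last by field.
by rewrite D0 invr0 !mulr0 !mul0r expr0n subr0.
Qed.

End Centering.

Section AverageOfLocalTerms.
Variables (C : numClosedFieldType) (n d : nat) (E : {set {set 'I_n}}).
Variable H : {set 'I_n} -> 'M[C]_(qdim n d).
Hypotheses (hermH : forall e, e \in E -> is_hermitian_op (H e))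
           (actH : forall e, e \in E -> acts_on e (H e))
           (normH : forall e, e \in E -> opnorm_le (H e) 1).
Local Notation D := (qdim n d).
Local Notation N := (\sum_(e in E) \sum_(f in E) (e :&: f != set0))%N.

(* Only intersecting pairs of terms contribute, each by at most D. *)
Lemma trace_sq_sum_center_le :
  \tr ((\sum_(e in E) center (H e)) *m (\sum_(f in E) center (H f))) <= D%:R * N%:R.
Proof.
rewrite mulmx_suml raddf_sum natr_sum mulr_sumr; apply: ler_sum => e eE.
rewrite mulmx_sumr raddf_sum natr_sum mulr_sumr; apply: ler_sum => f fE.
have le_D := center_mul_le (hermH eE) (hermH fE) (normH eE) (normH fE).
have [disj_ef|] /= := eqVneq (e :&: f) set0; last by rewrite mulr1.
have [D0|D_neq0] := eqVneq (D%:R : C) 0; first by move: le_D; rewrite D0 mulr0.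
rewrite mulr0 center_mul_orthogonal //.
exact: trace_mul_disjoint disj_ef (actH eE) (actH fE).
Qed.

Lemma esd_var_average_le s :
  eigen_multiset (#|E|%:R^-1 *: \sum_(e in E) H e) s -> esd_var s <= N%:R / #|E|%:R ^+ 2.
Proof.
have real_inv : (#|E|%:R^-1 : C)^* = #|E|%:R^-1 by rewrite fmorphV /= conjC_nat.
move=> /(esd_var_center (hermitian_scale_sum hermH real_inv)) ->.
rewrite center_scale center_sum -scalemxAl -scalemxAr !linearZ /= mulrA -expr2.
rewrite mulrAC mulrC; have [D0|D_neq0] := eqVneq (D%:R : C) 0.
  by rewrite D0 invr0 !mulr0 divr_ge0 ?ler0n ?exprn_ge0.
apply: le_trans (ler_wpM2r _ trace_sq_sum_center_le) _.
  by rewrite mulr_ge0 ?exprn_ge0 ?invr_ge0 ?ler0n.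
by rewrite [_ * N%:R]mulrC -mulrA [X in N%:R * X]mulrCA mulfV // mulr1 exprVn.
Qed.

End AverageOfLocalTerms.

Theorem mainTheorem5 (R : rcfType) (n d k m Delta : nat)
  (E : {set {set 'I_n}})
  (H : {set 'I_n} -> 'M[R[i]]_(qdim n d)) :
  (forall e, e \in E -> #|e| = k) ->
  #|E| = m -> (1 <= m)%N ->
  (forall v : 'I_n, #|[set e in E | v \in e]| = Delta) ->
  (forall e, e \in E -> is_hermitian_op (H e)) ->
  (forall e, e \in E -> acts_on e (H e)) ->
  (forall e, e \in E -> opnorm_le (H e) 1) ->
  forall s : seq R[i],
    eigen_multiset ((m%:R)^-1 *: \sum_(e in E) H e) s ->
    esd_var s <= 4%:R * (k%:R) ^+ 2 / n%:R.
Proof.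
move=> uniformE <- _ regularE hermH actH normH s eig_s.
apply: le_trans (esd_var_average_le hermH actH normH eig_s) _.
apply: le_trans (intersecting_pairs_density uniformE regularE _) _.
rewrite ler_wpM2r ?invr_ge0 ?ler0n // ler_peMl ?exprn_ge0 ?ler0n //.
by rewrite (ler_nat _ 1 4).
Qed.
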